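(* Let $T,T'$ be System $\mathsf{F_\wedge}$ types over a well-formed context $\Theta, X <: \top$ with $\Theta, X <: \top \vdash T <: T'$, and let $S_-,S_+$ be any types well-formed over a well-formed context $\Theta,\Theta'$. Then $\Theta,\Theta' \vdash T[(S_-,S_+)/X] <: T'[(S_-,S_+)/X]$.
   Context: System $\mathsf{F_\wedge}$: raw types $T ::= \top \mid X \mid T \to T \mid \forall X.T \mid T \wedge T$, identified up to $\alpha$-conversion. Contexts are finite sequences of assumptions $X<:T$ or $x:T$ with distinct variables, each type well-formed over the preceding part. Subtyping $\Theta \vdash S <: T$ is generated by: (Var) $\Theta, X<:T,\Theta' \vdash X <: T$; (Top) $T <: \top$; (Refl); (Trans); ($\to$) from $S'<:S$ and $T<:T'$ infer $S\to T <: S' \to T'$; ($\forall$) from $\Theta, X<:\top \vdash S <: T$ infer $\Theta \vdash \forall X.S <: \forall X.T$; (meet) $S\wedge S' <: S$, $S \wedge S' <: S'$, and from $T<:S$, $T<:S'$ infer $T <: S\wedge S'$. Mixed substitution $T[(S_-,S_+)/X]$ (assuming by $\alpha$-conversion that neither $X$ nor free variables of $S_-,S_+$ are bound in $T$): $X[(S_-,S_+)/X] = S_+$; $Y[(S_-,S_+)/X] = Y$ for $Y \not\equiv X$; $\top[(S_-,S_+)/X]=\top$; $(T\to T')[(S_-,S_+)/X] = T[(S_+,S_-)/X] \to T'[(S_-,S_+)/X]$; $(\forall Y.T)[(S_-,S_+)/X] = \forall Y.T[(S_-,S_+)/X]$; $(T\wedge T')[(S_-,S_+)/X] = T[(S_-,S_+)/X]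 \wedge T'[(S_-,S_+)/X]$. *)

(* System F-meet types in locally nameless representation:
   free type variables are named atoms (nat), bound ones are de Bruijn indices,
   so alpha-conversion is built in. *)
From Stdlib Require Import List Arith.
Import ListNotations.

Definition atom := nat.

Inductive typ : Type :=
  | typ_top : typ
  | typ_bvar : nat -> typ
  | typ_fvar : atom -> typ
  | typ_arrow : typ -> typ -> typ
  | typ_all : typ -> typ            (* forall X. T  (X bound as index 0) *)
  | typ_meet : typ -> typ -> typ.

Fixpoint open_rec (k : nat) (U : typ) (T : typ) : typ :=
  match T with
  | typ_top => typ_top
  | typ_bvar n => if Nat.eqb k n then U else typ_bvar n
  | typ_fvar X => typ_fvar X
  | typ_arrow T1 T2 => typ_arrow (open_rec k U T1) (open_rec k U T2)
  | typ_all T1 => typ_all (open_rec (S k) U T1)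
  | typ_meet T1 T2 => typ_meet (open_rec k U T1) (open_rec k U T2)
  end.

Definition open (T U : typ) : typ := open_rec 0 U T.

Inductive binding : Type :=
  | bind_sub : typ -> binding
  | bind_typ : typ -> binding.

(* Contexts are written left to right, the most recent assumption LAST:
   Theta, X <: T  is  Theta ++ [(X, bind_sub T)]. *)
Definition env := list (atom * binding).

Definition dom (E : env) : list atom := map fst E.

Inductive wf_typ : env -> typ -> Prop :=
  | wf_typ_top : forall E, wf_typ E typ_top
  | wf_typ_var : forall E X U, In (X, bind_sub U) E -> wf_typ E (typ_fvar X)
  | wf_typ_arrow : forall E T1 T2,
      wf_typ E T1 -> wf_typ E T2 -> wf_typ E (typ_arrow T1 T2)
  | wf_typ_all : forall E T (L : list atom),
      (forall X, ~ In X L -> wf_typ (E ++ [(X, bind_sub typ_top)]) (open T (typ_fvar X))) ->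
      wf_typ E (typ_all T)
  | wf_typ_meet : forall E T1 T2,
      wf_typ E T1 -> wf_typ E T2 -> wf_typ E (typ_meet T1 T2).

Inductive wf_env : env -> Prop :=
  | wf_env_nil : wf_env []
  | wf_env_sub : forall E X T,
      wf_env E -> ~ In X (dom E) -> wf_typ E T -> wf_env (E ++ [(X, bind_sub T)])
  | wf_env_typ : forall E x T,
      wf_env E -> ~ In x (dom E) -> wf_typ E T -> wf_env (E ++ [(x, bind_typ T)]).

(* Subtyping, exactly the rules of the paper (no extra side conditions);
   the (forall) rule uses cofinite quantification for the fresh variable. *)
Inductive sub : env -> typ -> typ -> Prop :=
  | sub_var : forall E X T, In (X, bind_sub T) E -> sub E (typ_fvar X) T
  | sub_top : forall E T, sub E T typ_top
  | sub_refl : forall E T, sub E T T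
  | sub_trans : forall E S U T, sub E S U -> sub E U T -> sub E S T
  | sub_arrow : forall E S S' T T',
      sub E S' S -> sub E T T' -> sub E (typ_arrow S T) (typ_arrow S' T')
  | sub_all : forall E S T (L : list atom),
      (forall X, ~ In X L ->
         sub (E ++ [(X, bind_sub typ_top)]) (open S (typ_fvar X)) (open T (typ_fvar X))) ->
      sub E (typ_all S) (typ_all T)
  | sub_meet_l : forall E S S', sub E (typ_meet S S') S
  | sub_meet_r : forall E S S', sub E (typ_meet S S') S'
  | sub_meet_glb : forall E T S S',
      sub E T S -> sub E T S' -> sub E T (typ_meet S S').

(* Mixed substitution T[(Sm,Sp)/X]: positive occurrences of X get Sp, and the
   roles swap in the domain of an arrow. *)
Fixpoint msubst (X : atom) (Sm Sp : typ) (T : typ) : typ :=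
  match T with
  | typ_top => typ_top
  | typ_bvar n => typ_bvar n
  | typ_fvar Y => if Nat.eqb Y X then Sp else typ_fvar Y
  | typ_arrow T1 T2 => typ_arrow (msubst X Sp Sm T1) (msubst X Sm Sp T2)
  | typ_all T1 => typ_all (msubst X Sm Sp T1)
  | typ_meet T1 T2 => typ_meet (msubst X Sm Sp T1) (msubst X Sm Sp T2)
  end.

(* Induction on the derivation of T <: T', generalised over the pair (Sm, Sp)
   because the arrow rule swaps them exactly as the mixed substitution does.
   The only rule that looks at X is (Var) for X <: Top, which becomes
   Sp <: Top. Every other bound Y <: U of the context comes from Theta, and
   since Theta is well formed and does not mention X, U contains no X: it is
   left unchanged by the substitution and is still a bound in Theta, Theta'.
   For the (forall) rule, substitution commutes with opening by a fresh
   variable because Sm and Sp are locally closed. No relation between Sm and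
   Sp is needed. *)

From Stdlib Require Import List Arith Lia.
Import ListNotations.

Fixpoint notin_fv (X : atom) (T : typ) : Prop :=
  match T with
  | typ_top | typ_bvar _ => True
  | typ_fvar Y => Y <> X
  | typ_arrow T1 T2 | typ_meet T1 T2 => notin_fv X T1 /\ notin_fv X T2
  | typ_all T1 => notin_fv X T1
  end.

Definition lc (T : typ) : Prop := forall k U, open_rec k U T = T.

Lemma atom_fresh (L : list atom) : exists Z, ~ In Z L.
Proof.
  exists (S (fold_right max 0 L)).
  assert (Hbound : forall Z, In Z L -> Z <= fold_right max 0 L).
  { induction L as [|A L IH]; simpl; intros Z HZ; [contradiction|].
    destruct HZ as [<-|HZ]; [lia|]. specialize (IH Z HZ); lia. }
  intro HL; apply Hbound in HL; lia.
Qed.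

Lemma in_dom (E : env) (Y : atom) (b : binding) : In (Y, b) E -> In Y (dom E).
Proof. intro H; exact (in_map fst E (Y, b) H). Qed.

Lemma dom_snoc (E : env) (Y : atom) (b : binding) :
  dom (E ++ [(Y, b)]) = dom E ++ [Y].
Proof. unfold dom; rewrite map_app; reflexivity. Qed.

Lemma notin_fv_open_rec (X : atom) (T U : typ) (k : nat) :
  notin_fv X (open_rec k U T) -> notin_fv X T.
Proof.
  revert k; induction T; intros k H; simpl in *; try tauto; eauto.
  - destruct H; eauto.
  - destruct H; eauto.
Qed.

Lemma msubst_notin_fv (X : atom) (Sm Sp T : typ) :
  notin_fv X T -> msubst X Sm Sp T = T.
Proof.
  revert Sm Sp; induction T; intros Sm Sp H; simpl in *; try reflexivity.
  - destruct (Nat.eqb_spec a X); congruence.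
  - destruct H; rewrite IHT1, IHT2; auto.
  - rewrite IHT; auto.
  - destruct H; rewrite IHT1, IHT2; auto.
Qed.

Lemma wf_typ_notin_fv (E : env) (T : typ) (X : atom) :
  wf_typ E T -> ~ In X (dom E) -> notin_fv X T.
Proof.
  intros Hwf; induction Hwf; intros HX; simpl; auto.
  - intros ->; exact (HX (in_dom _ _ _ H)).
  - destruct (atom_fresh (X :: L)) as [Z HZ].
    apply notin_fv_open_rec with (k := 0) (U := typ_fvar Z).
    apply H0; [intro; apply HZ; now right|].
    rewrite dom_snoc; intros Hin; apply in_app_or in Hin.
    destruct Hin as [Hin|[<-|[]]]; [contradiction|]. apply HZ; now left.
Qed.

Lemma wf_env_bound_notin_fv (E : env) (Y X : atom) (U : typ) :
  wf_env E -> In (Y, bind_sub U) E -> ~ In X (dom E) -> notin_fv X U.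
Proof.
  intros Hwf; induction Hwf; intros Hin HX; [contradiction| |];
    rewrite dom_snoc in HX;
    assert (HXE : ~ In X (dom E)) by (intro; apply HX, in_or_app; now left);
    apply in_app_or in Hin; destruct Hin as [Hin|[Hin|[]]]; auto.
  - injection Hin as -> ->. eapply wf_typ_notin_fv; eauto.
  - discriminate.
Qed.

Lemma wf_env_snoc_inv (E : env) (X : atom) (T : typ) :
  wf_env (E ++ [(X, bind_sub T)]) -> wf_env E /\ ~ In X (dom E).
Proof.
  intros Hwf; inversion Hwf as [Hnil| ? ? ? ? ? ? Heq | ? ? ? ? ? ? Heq].
  - destruct E; discriminate.
  - apply app_inj_tail in Heq as [-> Heq]; injection Heq as -> ->; auto.
  - apply app_inj_tail in Heq as [_ Heq]; discriminate.
Qed.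

Lemma open_rec_open_rec_neq (T U V : typ) (i j : nat) :
  i <> j -> open_rec i U (open_rec j V T) = open_rec j V T -> open_rec i U T = T.
Proof.
  revert i j; induction T; intros i j Hij H; simpl in *; auto.
  - destruct (Nat.eqb_spec j n), (Nat.eqb_spec i n); subst; auto; [lia|].
    simpl in H; rewrite Nat.eqb_refl in H; exact H.
  - injection H; intros; f_equal; eauto.
  - injection H; intros; f_equal; eapply IHT; [|eauto]; lia.
  - injection H; intros; f_equal; eauto.
Qed.

Lemma wf_typ_lc (E : env) (T : typ) : wf_typ E T -> lc T.
Proof.
  unfold lc; intros Hwf; induction Hwf; intros k V; simpl; auto.
  - rewrite IHHwf1, IHHwf2; reflexivity.
  - destruct (atom_fresh L) as [Z HZ]; f_equal.
    apply open_rec_open_rec_neq with (j := 0) (V := typ_fvar Z); [lia|].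
    apply H0, HZ.
  - rewrite IHHwf1, IHHwf2; reflexivity.
Qed.

Lemma open_rec_msubst (X Z : atom) (Sm Sp T : typ) (k : nat) :
  Z <> X -> lc Sm -> lc Sp ->
  open_rec k (typ_fvar Z) (msubst X Sm Sp T) = msubst X Sm Sp (open_rec k (typ_fvar Z) T).
Proof.
  intros HZX HSm HSp; revert k Sm Sp HSm HSp.
  induction T; intros k Sm Sp HSm HSp; simpl; auto.
  - destruct (Nat.eqb k n); simpl; auto.
    destruct (Nat.eqb_spec Z X); congruence.
  - destruct (Nat.eqb a X); simpl; auto.
  - rewrite IHT1, IHT2; auto.
  - rewrite IHT; auto.
  - rewrite IHT1, IHT2; auto.
Qed.

Definition msubst_env_compat (X : atom) (E F : env) : Prop :=
  forall Y U, In (Y, bind_sub U) E ->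
    (Y = X /\ U = typ_top) \/ (Y <> X /\ notin_fv X U /\ In (Y, bind_sub U) F).

Lemma msubst_env_compat_snoc (X Z : atom) (E F : env) :
  Z <> X -> msubst_env_compat X E F ->
  msubst_env_compat X (E ++ [(Z, bind_sub typ_top)]) (F ++ [(Z, bind_sub typ_top)]).
Proof.
  intros HZX Hcompat Y U Hin; apply in_app_or in Hin.
  destruct Hin as [Hin|[Hin|[]]].
  - destruct (Hcompat Y U Hin) as [?|(HYX & HU & HF)]; auto.
    right; repeat split; auto. apply in_or_app; now left.
  - injection Hin as <- <-. right; repeat split; simpl; auto.
    apply in_or_app; right; now left.
Qed.

Lemma msubst_env_compat_init (Theta Theta' : env) (X : atom) :
  wf_env Theta -> ~ In X (dom Theta) ->
  msubst_env_compat X (Theta ++ [(X, bind_sub typ_top)]) (Theta ++ Theta').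
Proof.
  intros Hwf HX Y U Hin; apply in_app_or in Hin.
  destruct Hin as [Hin|[Hin|[]]].
  - right; repeat split.
    + intros ->; exact (HX (in_dom _ _ _ Hin)).
    + eapply wf_env_bound_notin_fv; eauto.
    + apply in_or_app; now left.
  - injection Hin as <- <-; auto.
Qed.

Lemma sub_msubst (X : atom) (E : env) (T T' : typ) :
  sub E T T' -> forall (F : env) (Sm Sp : typ), lc Sm -> lc Sp ->
  msubst_env_compat X E F -> sub F (msubst X Sm Sp T) (msubst X Sm Sp T').
Proof.
  intros Hsub; induction Hsub; intros F Sm Sp HSm HSp Hcompat; simpl.
  - destruct (Hcompat X0 T H) as [[-> ->]|(HXY & HT & HF)].
    + apply sub_top.
    + destruct (Nat.eqb_spec X0 X); [contradiction|].
      rewrite msubst_notin_fv by exact HT. now apply sub_var.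
  - apply sub_top.
  - apply sub_refl.
  - eapply sub_trans; eauto.
  - apply sub_arrow; auto.
  - apply sub_all with (L := X :: L); intros Z HZ.
    assert (HZX : Z <> X) by (intro; apply HZ; now left).
    unfold open; rewrite !open_rec_msubst by assumption.
    apply H0; auto using msubst_env_compat_snoc.
    intro; apply HZ; now right.
  - apply sub_meet_l.
  - apply sub_meet_r.
  - apply sub_meet_glb; auto.
Qed.

Theorem lemma3p5 :
  forall (Theta Theta' : env) (X : atom) (T T' Sm Sp : typ),
    wf_env (Theta ++ [(X, bind_sub typ_top)]) ->
    wf_typ (Theta ++ [(X, bind_sub typ_top)]) T ->
    wf_typ (Theta ++ [(X, bind_sub typ_top)]) T' ->
    sub (Theta ++ [(X, bind_sub typ_top)]) T T' ->
    wf_env (Theta ++ Theta') ->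
    wf_typ (Theta ++ Theta') Sm ->
    wf_typ (Theta ++ Theta') Sp ->
    sub (Theta ++ Theta') (msubst X Sm Sp T) (msubst X Sm Sp T').
Proof.
  intros Theta Theta' X T T' Sm Sp Henv _ _ Hsub _ HSm HSp.
  destruct (wf_env_snoc_inv _ _ _ Henv) as [HTheta HX].
  apply sub_msubst with (E := Theta ++ [(X, bind_sub typ_top)]);
    eauto using wf_typ_lc, msubst_env_compat_init.
Qed.
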